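(* For the mechanism $\mathbb{M}_{\text{1-supply}}$ on a unit-supply two-sided market with XOS buyers, the expected sum of payments charged to the buyers equals $$\mathbb{E}\Big[\sum_{i\in[n]}\rho_i^B\Big]=\frac12\sum_{j\in L}p_j\,\Pr_{\mathbf v,Z}\big[j\notin\Lambda_{n+1}(\mathbf v,Z)\ \big|\ j\in Z\big].$$
   Context: Unit-supply two-sided market: buyers $[n]$, sellers $[k]$, seller $j$ owns only item $j$. Buyer valuations $v_i$ are monotone normalized XOS functions on $2^{[k]}$, drawn independently from public distributions $G_i$; seller values $w_j\ge0$ drawn independently from public distributions $F_j$. For XOS $v$ and $T\subseteq[k]$, $a(v,T,\cdot)$ is a fixed additive function with $a(v,T,T)=v(T)$, $a(v,T,S)\le v(S)$. $\mathbb{A}$ maps each buyer profile $\mathbf v$ to an allocation $X^{\mathbb A}(\mathbf v)$ of disjoint bundles to buyers. $\mathrm{SW}^B_j(\mathbf v)=a(v_i,X^{\mathbb A}_i(\mathbf v),\{j\})$ if $j\in X^{\mathbb A}_i(\mathbf v)$, else $0$. $L=\{j:\mathbb{E}[\mathrm{SW}^B_j(\mathbf v)]\ge4\mathbb{E}[w_j]\}$, $p_j=\frac12\mathbb{E}[\mathrm{SW}^B_j(\mathbf v)]$ for $j\in L$. $\mathbb{M}_{\text{1-supply}}$: for each $j\in L$, independently with probability $q_j=1/(2\Pr[w_j\le p_j])$ offer seller $j$ payment $p_j$; she accepts iff $w_j\le p_j$. $Z$ is the random set of items whose sellers received and accepted an offer; $\Lambda_1=Z$. Buyers $i=1,\dots,n$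 in turn pick $B_i\subseteq\Lambda_i$ maximizing $v_i(B_i)-\sum_{j\in B_i}p_j$, receive it and pay $\rho_i^B=\sum_{j\in B_i}p_j$, and $\Lambda_{i+1}=\Lambda_i\setminus B_i$. $\Lambda_{n+1}(\mathbf v,Z)$ is the set of accepted items bought by no buyer. *)

From HB Require Import structures.
From mathcomp Require Import all_boot all_order all_algebra.
From mathcomp Require Import all_classical all_reals all_analysis.
Set Implicit Arguments.
Unset Strict Implicit.
Unset Printing Implicit Defensive.
Import Order.TTheory GRing.Theory Num.Theory.
Local Open Scope ring_scope.

Definition is_XOS (R : realType) (k : nat) (v : {set 'I_k} -> R) : Prop :=
  v finset.set0 = 0 /\
  (forall S T : {set 'I_k}, S \subset T -> v S <= v T) /\
  exists (m : nat) (alpha : 'I_m.+1 -> 'I_k -> R),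
    (forall l j, 0 <= alpha l j) /\
    forall S : {set 'I_k},
      v S = \big[Num.max/0]_(l < m.+1) \sum_(j in S) alpha l j.

(** [a v T] is the additive function a(v,T,.) given by its item weights:
    a(v,T,S) = \sum_(j in S) a v T j. It supports v at T. *)
Definition supporting_clauses (R : realType) (k : nat)
  (a : ({set 'I_k} -> R) -> {set 'I_k} -> 'I_k -> R) : Prop :=
  forall v, is_XOS v -> forall T : {set 'I_k},
    \sum_(j in T) a v T j = v T /\
    forall S : {set 'I_k}, \sum_(j in S) a v T j <= v S.

Definition disjoint_allocation (R : realType) (n k : nat)
  (A : ('I_n -> {set 'I_k} -> R) -> 'I_n -> {set 'I_k}) : Prop :=
  forall vv i i', i != i' -> [disjoint A vv i & A vv i'].

(** SW^B_j(v) = a(v_i, X_i, {j}) if j \in X_i (unique by disjointness), else 0. *)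
Definition SWB (R : realType) (n k : nat)
  (a : ({set 'I_k} -> R) -> {set 'I_k} -> 'I_k -> R)
  (A : ('I_n -> {set 'I_k} -> R) -> 'I_n -> {set 'I_k})
  (vv : 'I_n -> {set 'I_k} -> R) (j : 'I_k) : R :=
  \sum_(i < n) (if j \in A vv i then a (vv i) (A vv i) j else 0).

Definition best_response (R : realType) (n k : nat) (p : 'I_k -> R)
  (choice : 'I_n -> ({set 'I_k} -> R) -> {set 'I_k} -> {set 'I_k}) : Prop :=
  forall i u (Lam : {set 'I_k}),
    choice i u Lam \subset Lam /\
    forall B : {set 'I_k}, B \subset Lam ->
      u B - \sum_(j in B) p j <= u (choice i u Lam) - \sum_(j in choice i u Lam) p j.

(** [avail choice vv Z m] = Lambda_{m+1}: items still available after buyers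
    0, ..., m-1 (0-indexed) have picked, starting from Lambda_1 = Z. *)
Fixpoint avail (R : realType) (n k : nat)
  (choice : 'I_n -> ({set 'I_k} -> R) -> {set 'I_k} -> {set 'I_k})
  (vv : 'I_n -> {set 'I_k} -> R) (Z : {set 'I_k}) (m : nat) : {set 'I_k} :=
  match m with
  | 0 => Z
  | m'.+1 =>
      let Lam := avail choice vv Z m' in
      match (insub m' : option 'I_n) with
      | Some i => Lam :\: choice i (vv i) Lam
      | None => Lam
      end
  end.

Definition bundle (R : realType) (n k : nat)
  (choice : 'I_n -> ({set 'I_k} -> R) -> {set 'I_k} -> {set 'I_k})
  (vv : 'I_n -> {set 'I_k} -> R) (Z : {set 'I_k}) (i : 'I_n) : {set 'I_k} :=
  choice i (vv i) (avail choice vv Z i).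

Definition buyer_payments (R : realType) (n k : nat) (p : 'I_k -> R)
  (choice : 'I_n -> ({set 'I_k} -> R) -> {set 'I_k} -> {set 'I_k})
  (vv : 'I_n -> {set 'I_k} -> R) (Z : {set 'I_k}) : R :=
  \sum_(i < n) \sum_(j in bundle choice vv Z i) p j.

Local Open Scope classical_set_scope.

(** Events generated by a random element X : Omega -> T (sigma(X) w.r.t.
    the final sigma-algebra on T). *)
Definition gen_events d (Omega : measurableType d) (T : Type) (X : Omega -> T)
  : set (set Omega) :=
  [set E | measurable E /\ exists B : set T, E = X @^-1` B].

Definition mutually_independent d (Omega : measurableType d) (R : realType)
  (P : probability Omega R) (I : finType) (E : I -> set (set Omega)) : Prop :=
  forall (J : {set I}) (F : I -> set Omega),
    (forall i, i \in J -> E i (F i)) ->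
    P (\big[setI/setT]_(i in J) F i) = (\prod_(i in J) P (F i))%E.

Definition condprob d (Omega : measurableType d) (R : realType)
  (P : probability Omega R) (A B : set Omega) : R :=
  fine (P (A `&` B)) / fine (P B).

From HB Require Import structures.
From mathcomp Require Import all_boot all_order all_algebra.
From mathcomp Require Import all_classical all_reals all_analysis.
From mathcomp Require Import ring.

(* Buyers only buy accepted items and each item is bought at most once, so the
   total payment is \sum_j p_j 1[j \in Z, j \notin Lam_(n+1)].  Taking expectations,
   Pr[j \in Z, j \notin Lam_(n+1)] = Pr[j \notin Lam_(n+1) | j \in Z] Pr[j \in Z], and by
   independence of the offer coin and the seller's value
   Pr[j \in Z] = q_j Pr[w_j <= p_j] = 1/2. *)

Set Implicit Arguments.
Unset Strict Implicit.
Unset Printing Implicit Defensive.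

Import Order.TTheory GRing.Theory Num.Theory.
Local Open Scope ring_scope.
Local Open Scope classical_set_scope.

Section SequentialPostedPrices.
Variables (R : realType) (n k : nat).
Variable choice : 'I_n -> ({set 'I_k} -> R) -> {set 'I_k} -> {set 'I_k}.
Hypothesis choice_subset : forall i u Lam, choice i u Lam \subset Lam.
Variables (vv : 'I_n -> {set 'I_k} -> R) (Z : {set 'I_k}).

Local Notation avail := (avail choice vv Z).
Local Notation bundle := (bundle choice vv Z).

Lemma availS (i : 'I_n) : avail i.+1 = avail i :\: bundle i.
Proof. by rewrite /= valK. Qed.

Lemma avail_subset m : avail m \subset Z.
Proof.
elim: m => [|m IHm] /=; first exact: subxx.
by case: insubP => // i _ _; rewrite (fintype.subset_trans _ IHm) ?subsetDl.
Qed.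

Lemma sum_sold_availS (p : 'I_k -> R) (i : 'I_n) :
  \sum_(j in Z :\: avail i.+1) p j =
  \sum_(j in Z :\: avail i) p j + \sum_(j in bundle i) p j.
Proof.
have bundle_avail : bundle i \subset avail i by apply: choice_subset.
have bundleZ := fintype.subset_trans bundle_avail (avail_subset i).
rewrite availS (big_setID (bundle i)) addrC; congr (_ + _); apply: eq_bigl => j;
  rewrite !inE; case: (boolP (j \in bundle i)) => //= jB.
all: by rewrite ?andbF ?(fintype.subsetP bundleZ _ jB) ?(fintype.subsetP bundle_avail _ jB).
Qed.

Lemma buyer_payments_sold (p : 'I_k -> R) :
  buyer_payments p choice vv Z = \sum_(j in Z :\: avail n) p j.
Proof.
pose sold m := \sum_(j in Z :\: avail m) p j.
transitivity (\sum_(i < n) (sold i.+1 - sold i)).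
  by apply: eq_bigr => i _; rewrite /sold sum_sold_availS addrAC subrr add0r.
rewrite -(big_mkord xpredT (fun m => sold m.+1 - sold m)) telescope_sumr //.
by rewrite /sold /= finset.setDv big_set0 subr0.
Qed.

End SequentialPostedPrices.

Lemma sum_setD_indic (R : realType) (T : Type) (I : finType)
    (X Y : T -> {set I}) (p : I -> R) (t : T) :
  \sum_(j in X t :\: Y t) p j =
  \sum_j p j * \1_([set s | j \notin Y s] `&` [set s | j \in X s]) t.
Proof.
rewrite big_mkcond; apply: eq_bigr => j _; rewrite indicE.
have -> : (t \in [set s | j \notin Y s] `&` [set s | j \in X s]) = (j \in X t :\: Y t).
  by rewrite inE; apply/idP/idP => [/set_mem[/= -> ->] //|/andP[? ?]]; exact: mem_set.
by case: ifP; rewrite ?mulr1 ?mulr0.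
Qed.

Section Probability.
Context d (Omega : measurableType d) (R : realType) (P : probability Omega R).

Lemma measurable_negb (b : Omega -> bool) :
  measurable [set om | b om] -> measurable [set om | ~~ b om].
Proof.
move=> mb; rewrite (_ : [set om | _] = ~` [set om | b om]); first exact: measurableC.
by apply/seteqP; split => om /= /negP.
Qed.

Lemma measurable_sublevel (f : Omega -> R) (r : R) :
  measurable_fun setT f -> measurable [set om | f om <= r].
Proof.
move=> mf; have := mf measurableT _ (measurable_itv (Interval -oo%O (BRight r))).
by rewrite setTI; congr measurable; apply/seteqP; split => om /=; rewrite in_itv.
Qed.

Lemma gen_events_preimage (T : Type) (X : Omega -> T) (B : set T) :
  measurable (X @^-1` B) -> gen_events X (X @^-1` B).
Proof. by split; last exists B. Qed.

Lemma mutually_independent_setI (I : finType) (E : I -> set (set Omega))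
    (i i' : I) (F G : set Omega) :
  mutually_independent P E -> i != i' -> E i F -> E i' G ->
  P (F `&` G) = (P F * P G)%E.
Proof.
move=> indep ii' EF EG.
have := indep [set i; i']%SET (fun l => if l == i then F else G).
rewrite !big_setU1 ?inE // !big_set1 /= eqxx eq_sym (negbTE ii'); apply => l.
by rewrite !inE => /orP[] /eqP ->; rewrite ?eqxx // eq_sym (negbTE ii').
Qed.

Lemma expectation_sum_indic (I : finType) (p : I -> R) (S : I -> set Omega) :
  (forall i, measurable (S i)) ->
  ('E_P[fun om => (\sum_i p i * \1_(S i) om)%R] =
   (\sum_i p i * fine (P (S i)))%:E)%E.
Proof.
move=> mS; rewrite expectation.unlock.
under eq_integral => om _ do rewrite -sumEFin.
rewrite integral_sum //= => [|i]; last first.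
  by under eq_fun do rewrite EFinM; apply: integrableZl => //; exact: integrable_indic.
rewrite -sumEFin; apply: eq_bigr => i _.
under eq_integral => om _ do rewrite EFinM.
rewrite integralZl ?integral_indic ?setIT ?EFinM ?fineK ?fin_num_measure //.
exact: integrable_indic.
Qed.

Lemma measureI_condprob (A B : set Omega) :
  measurable A -> measurable B ->
  fine (P (A `&` B)) = condprob P A B * fine (P B).
Proof.
move=> mA mB; rewrite /condprob.
have [PB0|PB_neq0] := eqVneq (fine (P B)) 0; last by rewrite divfK.
have PB0E : P B = 0%E by apply/eqP; rewrite -fine_eq0 ?fin_num_measure ?PB0.
by rewrite (subset_measure0 (measurableI _ _ mA mB) mB (@subIsetr _ A B)) // PB0 mulr0.
Qed.

(* The hypothesis has the shape Pr[w_j <= p_j] q_j with q_j = (2 Pr[w_j <= p_j])^-1;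
   when x = 0, the junk value 0^-1 = 0 makes B null and both sides vanish. *)
Lemma measureI_condprob_half (A B : set Omega) (x : R) :
  measurable A -> measurable B -> fine (P B) = x * (2 * x)^-1 ->
  fine (P (A `&` B)) = condprob P A B / 2.
Proof.
move=> mA mB PBx; rewrite measureI_condprob // /condprob PBx.
have [->|x_neq0] := eqVneq x 0; first by rewrite mul0r invr0 !mulr0 mul0r.
by field.
Qed.

End Probability.

Theorem proposition2
  (R : realType) (d : measure_display) (Omega : measurableType d)
  (P : probability Omega R) (n k : nat)
  (a : ({set 'I_k} -> R) -> {set 'I_k} -> 'I_k -> R)
  (A : ('I_n -> {set 'I_k} -> R) -> 'I_n -> {set 'I_k})
  (v : 'I_n -> Omega -> {set 'I_k} -> R)   (* buyer valuations v_i ~ G_i *)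
  (w : 'I_k -> Omega -> R)                 (* seller values w_j ~ F_j *)
  (c : 'I_k -> Omega -> bool)              (* mechanism's offer coins *)
  (choice : 'I_n -> ({set 'I_k} -> R) -> {set 'I_k} -> {set 'I_k}) :
  let SW (j : 'I_k) (om : Omega) := SWB a A (fun i => v i om) j in
  let inL (j : 'I_k) := (4%:E * 'E_P[w j] <= 'E_P[SW j])%E in
  let p (j : 'I_k) := fine ('E_P[SW j])%E / 2 in
  let q (j : 'I_k) := (2 * fine (P [set om | w j om <= p j]))^-1 in
  let Z (om : Omega) : {set 'I_k} := [set j | inL j && c j om && (w j om <= p j)]%SET in
  let Lam_end (om : Omega) := avail choice (fun i => v i om) (Z om) n in
  supporting_clauses a ->
  disjoint_allocation A ->
  (forall i om, is_XOS (v i om)) ->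
  (forall j om, 0 <= w j om) ->
  (forall j, measurable_fun setT (w j)) ->
  (forall j, measurable [set om | c j om]) ->
  mutually_independent P
    (fun x : 'I_n + 'I_k + 'I_k =>
       match x with
       | inl (inl i) => gen_events (v i)
       | inl (inr j) => gen_events (w j)
       | inr j => gen_events (c j)
       end) ->
  (forall j, inL j -> P [set om | c j om] = (q j)%:E) ->
  (forall j, P.-integrable setT (fun om => (SW j om)%:E)) ->
  best_response p choice ->
  (forall j, measurable [set om | j \in Lam_end om]) ->
  ('E_P[fun om => buyer_payments p choice (fun i => v i om) (Z om)])%E =
  ((1 / 2) * \sum_(j < k | inL j)
      p j * condprob P [set om | j \notin Lam_end om] [set om | j \in Z om])%:E.
Proof.
(* Neither the XOS structure nor the allocation rule matters: only the prices,
   the acceptance events and the fact that buyers pick available items do. *)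
move=> SW inL p q Z Lam_end _ _ _ _ w_meas c_meas indep Pc _ best left_meas.
have choice_sub i u Lam : choice i u Lam \subset Lam by case: (best i u Lam).
have Z_event j : [set om | j \in Z om] =
    if inL j then [set om | w j om <= p j] `&` [set om | c j om] else set0.
  apply/seteqP; split => om; rewrite /= inE; case: (inL j) => //=.
  - by case/andP.
  - by case=> -> ->.
have Z_meas j : measurable [set om | j \in Z om].
  rewrite Z_event; case: (inL j) => //.
  by apply: measurableI => //; exact: measurable_sublevel.
pose sold j := [set om | j \notin Lam_end om] `&` [set om | j \in Z om].
have sold_meas j : measurable (sold j) by apply/measurableI/Z_meas/measurable_negb.
have payments_sold om : buyer_payments p choice (fun i => v i om) (Z om) =
    \sum_j p j * \1_(sold j) om.
  by rewrite buyer_payments_sold // (sum_setD_indic Z Lam_end).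
rewrite (funext payments_sold) expectation_sum_indic // mulr_sumr.
congr EFin; rewrite [RHS]big_mkcond; apply: eq_bigr => j _ /=.
case: ifPn => [jL|njL]; last by rewrite /sold Z_event (negbTE njL) setI0 measure0 mulr0.
rewrite /sold (measureI_condprob_half (x := fine (P [set om | w j om <= p j]))
  (measurable_negb (left_meas j)) (Z_meas j)).
  by rewrite mulrA mul1r mulrC.
rewrite Z_event jL (mutually_independent_setI indep (i := inl (inr j)) (i' := inr j)) //.
- by rewrite Pc // fineM ?fin_num_measure //; exact: measurable_sublevel.
- exact: (gen_events_preimage (B := [set r | r <= p j]) (measurable_sublevel _ (w_meas j))).
- exact: (gen_events_preimage (B := [set true]) (c_meas j)).
Qed.
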